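(* The multiplication map $m:\Omega^1_{\mathcal D}(\mathcal A)\otimes_{\mathcal A}\Omega^1_{\mathcal D}(\mathcal A)\to\Omega^2_{\mathcal D}(\mathcal A)$ is surjective and satisfies, for all $a_i,b_i\in\mathcal A$, $$m\Big(\sum_{i=1}^3 e_ia_i\otimes\sum_{j=1}^3 e_jb_j\Big)=\sum_{1\le i<j\le 3}e_{ij}(a_ib_j-a_jb_i).$$
   Context: Let $\mathcal O_3$ be the Cuntz algebra with three generators: the universal C*-algebra generated by $S_1,S_2,S_3$ with $S_i^*S_i=1$ ($i=1,2,3$) and $\sum_{j=1}^3 S_jS_j^*=1$. Let $\mathcal A$ be the unital $*$-subalgebra of $\mathcal O_3$ generated (algebraically) by $S_1,S_2,S_3$ (the paper denotes it also by $\mathcal O_3$). For $A=(a_{ij})\in SO(3)$, $\alpha_A(S_i)=\sum_j a_{ij}S_j$ defines an automorphism; differentiating along the one-parameter subgroups $\exp(\theta X_k)$ of $SO(3)$ gives three $*$-derivations $\partial_1,\partial_2,\partial_3$ of $\mathcal A$, determined by $\partial_1S_1=0,\ \partial_1S_2=-S_3,\ \partial_1S_3=S_2$; $\partial_2S_1=-S_3,\ \partial_2S_2=0,\ \partial_2S_3=S_1$; $\partial_3S_1=S_2,\ \partial_3S_2=-S_1,\ \partial_3S_3=0$. They satisfy $[\partial_1,\partial_2]=-\partial_3$, $[\partial_2,\partial_3]=\partial_1$, $[\partial_1,\partial_3]=-\partial_2$. Let $\tau$ be the unique (faithful) KMS state of $\mathcal O_3$, $\mathcal H=L^2(\mathcal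 O_3,\tau)\otimes\mathbb C^N$, $\pi(a)=a\otimes I$ (left multiplication), and $\mathcal D=\sum_{i=1}^3\partial_i\otimes\sigma_i$, where $\sigma_1,\sigma_2,\sigma_3\in M_N(\mathbb C)$ satisfy $\sigma_i^2=I$, $\sigma_i\sigma_j=-\sigma_j\sigma_i$ ($i\neq j$), and both $\{\sigma_1,\sigma_2,\sigma_3\}$ and $\{I,\sigma_1\sigma_2,\sigma_1\sigma_3,\sigma_2\sigma_3\}$ are linearly independent (e.g. the $2\times 2$ Pauli matrices). Then $[\mathcal D,\pi(a)]=\sum_i\partial_i(a)\otimes\sigma_i$. Let $(\Omega^\bullet(\mathcal A),\delta)$ be the universal differential algebra of $\mathcal A$ and $\Pi(a_0\delta a_1\cdots\delta a_k)=\pi(a_0)[\mathcal D,\pi(a_1)]\cdots[\mathcal D,\pi(a_k)]$. With $J_0^k=\ker\Pi\cap\Omega^k(\mathcal A)$, the Connes space of $k$-forms is $\Omega^k_{\mathcal D}(\mathcal A)=\Pi(\Omega^k(\mathcal A))/\Pi(\delta J_0^{k-1})$. The multiplication $m$ sends (class of $\Pi(\omega)$)$\otimes$(class of $\Pi(\eta)$) to the class of $\Pi(\omega\eta)$. It is known that $\Omega^1_{\mathcal D}(\mathcal A)$ is free with basis $e_i=1\otimes\sigma_i$ ($i=1,2,3$), with $ae_i=e_ia$ for $a\in\mathcal A$, and $\Omega^2_{\mathcal D}(\mathcal A)$ is free with basis $e_{ij}$ = class of $1\otimes\sigma_i\sigma_j$ ($i<j$). *)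

From HB Require Import structures.
From mathcomp Require Import all_boot all_order all_algebra all_field.
Set Implicit Arguments. Unset Strict Implicit. Unset Printing Implicit Defensive.
Import Order.TTheory GRing.Theory Num.Theory.
Local Open Scope ring_scope.

(* The algebraic Cuntz algebra A (the unital *-subalgebra of O_3       *)
(* generated by S_1,S_2,S_3): a complex algebra with a conjugate-linear *)
(* anti-multiplicative involution [star], generated as an algebra by   *)
(* the S_i and star S_i, subject to the Cuntz relations.  Indices      *)
(* 1,2,3 of the paper are 0,1,2 here.                                  *)
Definition cuntz_star_algebra (A : algType algC) (star : A -> A)
    (S : 'I_3 -> A) : Prop :=
  [/\ [/\ (forall a, star (star a) = a),
      (forall a b, star (a + b) = star a + star b),
      (forall (c : algC) a, star (c *: a) = (Num.conj c) *: star a)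
    & (forall a b, star (a * b) = star b * star a)],
      (forall i j : 'I_3, star (S i) * S j = (i == j)%:R),
      \sum_(j < 3) S j * star (S j) = 1
    &
      forall P : A -> Prop,
        P 1 ->
        (forall i, P (S i)) -> (forall i, P (star (S i))) ->
        (forall a b, P a -> P b -> P (a + b)) ->
        (forall a b, P a -> P b -> P (a * b)) ->
        (forall (c : algC) a, P a -> P (c *: a)) ->
        forall a, P a].

Definition cuntz_derivations (A : algType algC) (star : A -> A)
    (S : 'I_3 -> A) (d : 'I_3 -> A -> A) : Prop :=
  [/\ [/\ (forall k (c : algC) a b, d k (c *: a + b) = c *: d k a + d k b),
      (forall k a b, d k (a * b) = d k a * b + a * d k b)
    & (forall k a, d k (star a) = star (d k a))],
      [/\ d 0 (S 0) = 0, d 0 (S 1) = - S 2 & d 0 (S 2) = S 1],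
      [/\ d 1 (S 0) = - S 2, d 1 (S 1) = 0 & d 1 (S 2) = S 0]
    &
      [/\ d 2 (S 0) = S 1, d 2 (S 1) = - S 0 & d 2 (S 2) = 0]].

Definition clifford_triple (N : nat) (sigma : 'I_3 -> 'M[algC]_N) : Prop :=
  [/\ (forall i, sigma i *m sigma i = 1%:M),
      (forall i j, i != j -> sigma i *m sigma j = - (sigma j *m sigma i)),
      (forall c : 'I_3 -> algC,
          \sum_(i < 3) c i *: sigma i = 0 -> forall i, c i = 0)
    & (forall c0 c1 c2 c3 : algC,
          c0 *: 1%:M + c1 *: (sigma 0 *m sigma 1) + c2 *: (sigma 0 *m sigma 2)
            + c3 *: (sigma 1 *m sigma 2) = 0 ->
          [/\ c0 = 0, c1 = 0, c2 = 0 & c3 = 0])].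

Section ConnesForms.
Variables (A : algType algC) (N : nat) (d : 'I_3 -> A -> A)
          (sigma : 'I_3 -> 'M[algC]_N).

(* A (x) M_N(C) is modelled as M_N(A); a (x) X is a%:M *m X. *)
Definition sig_hat (i : 'I_3) : 'M[A]_N := map_mx (fun c : algC => c%:A) (sigma i).

(* [D, pi(a)] = sum_i d_i(a) (x) sigma_i *)
Definition commD (a : A) : 'M[A]_N := \sum_(i < 3) (d i a)%:M *m sig_hat i.

(* Universal forms, as formal finite sums:
   a 1-form  sum a0 da1        is a  seq (A * A),
   a 2-form  sum a0 da1 da2    is a  seq (A * A * A) (= ((a0,a1),a2)). *)
Definition Pi1 (x : A * A) : 'M[A]_N := (x.1)%:M *m commD x.2.
Definition Pi2 (x : A * A * A) : 'M[A]_N :=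
  (x.1.1)%:M *m commD x.1.2 *m commD x.2.
Definition PiF1 (w : seq (A * A)) : 'M[A]_N := \sum_(x <- w) Pi1 x.
Definition PiF2 (w : seq (A * A * A)) : 'M[A]_N := \sum_(x <- w) Pi2 x.

(* delta (a0 da1) = 1 da0 da1 *)
Definition delta1 (w : seq (A * A)) : seq (A * A * A) :=
  [seq (1, x.1, x.2) | x <- w].

(* product in the universal algebra:
   (a0 da1)(b0 db1) = a0 d(a1 b0) db1 - a0 a1 db0 db1 *)
Definition mul1 (w v : seq (A * A)) : seq (A * A * A) :=
  flatten [seq flatten [seq [:: (x.1, x.2 * y.1, y.2); (- (x.1 * x.2), y.1, y.2)]
                       | y <- v] | x <- w].

(* Junk in degree 2: Pi(delta J_0^1), J_0^1 = ker Pi on 1-forms.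
   Two elements of Pi(Omega^2) have the same class in Omega^2_D iff
   their difference is junk2. *)
Definition junk2 (M : 'M[A]_N) : Prop :=
  exists w : seq (A * A), PiF1 w = 0 /\ M = PiF2 (delta1 w).

End ConnesForms.

(* By the Leibniz rule, [Pi] is multiplicative on universal forms, so [m] is
   induced by the matrix product.  Every [a0 da1 da2] is the product of
   [a0 da1] and [1 da2], whence surjectivity.  For the 1-forms
   [sum e_i a_i] and [sum e_j b_j], the Clifford relations give the product
   [sum_i a_i b_i + sum_(i<j) e_ij (a_i b_j - a_j b_i)], and the scalar
   part is junk: [S^* dS] has image zero for the first generator [S], while
   [dS^* dS = 2] because [S_i^* S_j = delta_ij]; so [(c/2) S^* dS] exhibits
   any scalar [c] as the image of a differential of a junk 1-form. *)

From mathcomp Require Import all_boot all_order all_algebra all_field.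
Set Implicit Arguments.
Unset Strict Implicit.
Unset Printing Implicit Defensive.
Import Order.TTheory GRing.Theory Num.Theory.
Local Open Scope ring_scope.

Lemma sum_ord3 (V : nmodType) (F : 'I_3 -> V) : \sum_(i < 3) F i = F 0 + F 1 + F 2.
Proof. by rewrite !big_ord_recl big_ord0 addr0 addrA; do 3 f_equal; apply: val_inj. Qed.

Lemma sum_ord_trichotomy (V : nmodType) (n : nat) (i : 'I_n) (F : 'I_n -> V) :
  \sum_j F j = F i + \sum_(j : 'I_n | (i < j)%N) F j + \sum_(j : 'I_n | (j < i)%N) F j.
Proof.
rewrite (bigD1 i) //= (bigID (fun j : 'I_n => (i < j)%N)) /= addrA.
by congr (_ + _ + _); apply: eq_bigl => j; rewrite -val_eqE /= neq_ltn; case: ltngtP.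
Qed.

Lemma mulr_clifford_sums (R : pzRingType) (n : nat) (e x y : 'I_n -> R) :
    (forall i, e i * e i = 1) ->
    (forall i j, i != j -> e i * e j = - (e j * e i)) ->
    (forall i j, GRing.comm (e i) (y j)) ->
  (\sum_i x i * e i) * (\sum_j y j * e j) =
    \sum_(i < n) x i * y i
    + \sum_(i < n) \sum_(j : 'I_n | (i < j)%N) (x i * y j - x j * y i) * (e i * e j).
Proof.
move=> e_sqr e_anti ey.
have termE i j : x i * e i * (y j * e j) = x i * y j * (e i * e j).
  by rewrite -!mulrA (mulrA (e i)) ey !mulrA.
rewrite mulr_suml; under eq_bigr => i _ do rewrite mulr_sumr (sum_ord_trichotomy i).
rewrite !big_split /= -addrA; congr (_ + _).
  by apply: eq_bigr => i _; rewrite termE e_sqr mulr1.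
rewrite [X in _ + X](exchange_big_dep xpredT) //= -big_split /=.
apply: eq_bigr => i _; rewrite -big_split /=; apply: eq_bigr => j ij.
have ji : j != i by rewrite -val_eqE /= neq_ltn ij orbT.
by rewrite !termE (e_anti j i ji) mulrN mulrBl.
Qed.

Lemma map_in_alg_mx_scalarC (R : pzRingType) (B : algType R) (n : nat)
    (M : 'M[R]_n) (c : B) :
  map_mx (in_alg B) M *m c%:M = c%:M *m map_mx (in_alg B) M.
Proof.
apply/matrixP=> k l; rewrite !mxE.
rewrite (bigD1 l) //= big1 => [|m /negbTE ml]; last by rewrite !mxE ml mulr0n mulr0.
rewrite (bigD1 k) //= big1 => [|m /negbTE km]; last by rewrite !mxE eq_sym km mulr0n mul0r.
by rewrite !mxE !eqxx !mulr1n !addr0 mulr_algl mulr_algr.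
Qed.

Section ConnesForms.
Variables (A : algType algC) (N : nat) (d : 'I_3 -> A -> A)
          (sigma : 'I_3 -> 'M[algC]_N).
Local Notation E := (@sig_hat A N sigma).
Local Notation commD := (commD d sigma).
Local Notation Pi1 := (Pi1 d sigma).
Local Notation Pi2 := (Pi2 d sigma).

Lemma sig_hat_scalar_mxC i (c : A) : E i *m c%:M = c%:M *m E i.
Proof. exact: map_in_alg_mx_scalarC. Qed.

Lemma scalar_sig_hat_mulmx (a b : A) i j :
  (a%:M *m E i) *m (b%:M *m E j) = (a * b)%:M *m (E i *m E j).
Proof. by rewrite mulmxA -(mulmxA _ (E i)) sig_hat_scalar_mxC !mulmxA scalar_mxM. Qed.

Hypothesis d_Leibniz : forall k a b, d k (a * b) = d k a * b + a * d k b.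

Lemma commD_mul a b : commD (a * b) = commD a *m b%:M + a%:M *m commD b.
Proof.
rewrite /commD mulmx_suml mulmx_sumr -big_split /=; apply: eq_bigr => k _.
by rewrite d_Leibniz raddfD /= mulmxDl !scalar_mxM -!mulmxA sig_hat_scalar_mxC.
Qed.

Lemma Pi1_mul x y :
  Pi1 x *m Pi1 y = Pi2 (x.1, x.2 * y.1, y.2) + Pi2 (- (x.1 * x.2), y.1, y.2).
Proof.
rewrite /Pi2 /Pi1 /= commD_mul mulmxDr mulmxDl raddfN /= !mulNmx scalar_mxM.
by rewrite !mulmxA addrK.
Qed.

Lemma PiF2_mul1 w v : PiF2 d sigma (mul1 w v) = PiF1 d sigma w *m PiF1 d sigma v.
Proof.
elim: w => [|x w IHw]; first by rewrite /PiF1 big_nil mul0mx /PiF2 big_nil.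
rewrite /mul1 /= -/(mul1 w v) /PiF2 big_cat -/(PiF2 d sigma (mul1 w v)) IHw.
rewrite /PiF1 big_cons mulmxDl.
congr (_ + _); elim: v {IHw} => [|y v IHv] /=; first by rewrite !big_nil mulmx0.
by rewrite !big_cons IHv addrA mulmxDr Pi1_mul.
Qed.

Lemma PiF2_mul1_split x :
  PiF2 d sigma (mul1 [:: (x.1.1, x.1.2)] [:: (1, x.2)]) = Pi2 x.
Proof. by rewrite PiF2_mul1 /PiF1 !big_seq1 /Pi1 /Pi2 mul1mx. Qed.

Hypothesis sigma_sqr : forall i, sigma i *m sigma i = 1%:M.
Hypothesis sigma_anti :
  forall i j, i != j -> sigma i *m sigma j = - (sigma j *m sigma i).

Lemma sig_hat_mulmx i j : E i *m E j = map_mx (in_alg A) (sigma i *m sigma j).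
Proof. by rewrite map_mxM. Qed.

Lemma sig_hat_sqr i : E i *m E i = 1%:M.
Proof. by rewrite sig_hat_mulmx sigma_sqr map_scalar_mx rmorph1. Qed.

Lemma mulmx_sig_hat_sums (a b : 'I_3 -> A) :
  (\sum_(i < 3) (a i)%:M *m E i) *m (\sum_(j < 3) (b j)%:M *m E j) =
    (\sum_(i < 3) a i * b i)%:M
    + \sum_(i < 3) \sum_(j < 3 | (i < j)%N) (a i * b j - a j * b i)%:M *m (E i *m E j).
Proof.
rewrite mulmxE mulr_clifford_sums.
- rewrite raddf_sum /=; congr (_ + _).
    by apply: eq_bigr => i _; rewrite scalar_mxM mulmxE.
  apply: eq_bigr => i _; apply: eq_bigr => j _.
  by rewrite raddfB /= !scalar_mxM mulmxE.
- by move=> i; rewrite -mulmxE sig_hat_sqr.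
- by move=> i j ij; rewrite -!mulmxE !sig_hat_mulmx sigma_anti // map_mxN.
- by move=> i j; rewrite /GRing.comm -mulmxE sig_hat_scalar_mxC.
Qed.

Variables (star : A -> A) (S : 'I_3 -> A).
Hypothesis star_scale : forall (c : algC) a, star (c *: a) = Num.conj c *: star a.
Hypothesis starS : forall i j, star (S i) * S j = (i == j)%:R.
Hypothesis d_star : forall k a, d k (star a) = star (d k a).
Hypothesis d_S0 : [/\ d 0 (S 0) = 0, d 1 (S 0) = - S 2 & d 2 (S 0) = S 1].

Lemma star_opp a : star (- a) = - star a.
Proof. by rewrite -scaleN1r star_scale rmorphN1 scaleN1r. Qed.

Lemma star0 : star 0 = 0.
Proof. by have := star_scale 0 0; rewrite scale0r rmorph0 scale0r. Qed.

Lemma commD_S0 : commD (S 0) = (- S 2)%:M *m E 1 + (S 1)%:M *m E 2.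
Proof.
by case: d_S0 => d0S0 d1S0 d2S0; rewrite /commD sum_ord3 d0S0 raddf0 mul0mx add0r d1S0 d2S0.
Qed.

Lemma commD_star_S0 : commD (star (S 0)) = (- star (S 2))%:M *m E 1 + (star (S 1))%:M *m E 2.
Proof.
case: d_S0 => d0S0 d1S0 d2S0; rewrite /commD sum_ord3 !d_star d0S0 d1S0 d2S0.
by rewrite star0 raddf0 mul0mx add0r star_opp.
Qed.

Lemma starS0_commD_S0 : (star (S 0))%:M *m commD (S 0) = 0.
Proof.
rewrite commD_S0 mulmxDr !mulmxA -!scalar_mxM mulrN !starS /=.
by rewrite oppr0 raddf0 !mul0mx addr0.
Qed.

Lemma commD_star_S0_commD_S0 : commD (star (S 0)) *m commD (S 0) = 2%:M.
Proof.
rewrite commD_star_S0 commD_S0 !mulmxDl !mulmxDr !scalar_sig_hat_mulmx.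
rewrite mulrNN mulNr mulrN !starS /= oppr0 raddf0 !mul0mx addr0 add0r.
by rewrite !mul1mx !sig_hat_sqr -raddfD.
Qed.

Lemma junk2_scalar_mx c : junk2 d sigma c%:M.
Proof.
pose c' := (2^-1 : algC) *: c.
exists [:: (c' * star (S 0), S 0)]; split.
  by rewrite /PiF1 big_seq1 /Pi1 /= scalar_mxM -mulmxA starS0_commD_S0 mulmx0.
rewrite /PiF2 /delta1 /= big_seq1 /Pi2 /= mul1mx commD_mul mulmxDl -!mulmxA.
rewrite starS0_commD_S0 commD_star_S0_commD_S0 mulmx0 add0r -scalar_mxM.
by rewrite /c' -scalerAl mulr_natr -scaler_nat scalerA mulVf ?pnatr_eq0 ?scale1r.
Qed.

End ConnesForms.

Theorem mainTheorem3 (A : algType algC) (star : A -> A) (S : 'I_3 -> A)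
    (d : 'I_3 -> A -> A) (N : nat) (sigma : 'I_3 -> 'M[algC]_N) :
  cuntz_star_algebra star S ->
  cuntz_derivations star S d ->
  clifford_triple sigma ->
  (forall th : seq (A * A * A),
     exists p : seq (seq (A * A) * seq (A * A)),
       junk2 d sigma (PiF2 d sigma th
                      - \sum_(q <- p) PiF2 d sigma (mul1 q.1 q.2)))
  /\
  (forall (a b : 'I_3 -> A) (w v : seq (A * A)),
     PiF1 d sigma w = \sum_(i < 3) (a i)%:M *m @sig_hat A N sigma i ->
     PiF1 d sigma v = \sum_(j < 3) (b j)%:M *m @sig_hat A N sigma j ->
     junk2 d sigma
       (PiF2 d sigma (mul1 w v)
        - \sum_(i < 3) \sum_(j < 3 | (i < j)%N)
            (a i * b j - a j * b i)%:M *m (@sig_hat A N sigma i *m @sig_hat A N sigma j))).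
Proof.
case=> [[_ _ star_scale _] starS _ _] [[_ d_Leibniz d_star] [d0S0 _ _] [d1S0 _ _] [d2S0 _ _]].
case=> sigma_sqr sigma_anti _ _; split.
  move=> th; exists [seq ([:: (x.1.1, x.1.2)], [:: (1, x.2)]) | x <- th].
  rewrite big_map; under eq_bigr => x _ do rewrite /= PiF2_mul1_split //.
  rewrite subrr; exists [::].
  by rewrite /PiF1 /PiF2 /delta1 !big_nil.
move=> a b w v hw hv.
rewrite PiF2_mul1 // hw hv mulmx_sig_hat_sums // addrK.
exact: junk2_scalar_mx.
Qed.
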